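(* Let $\vec v$ be a list of variables, $X,Y$ expectations, and let $S_C$ be the HeyVL encoding of the specification statement $[\vec v](X,Y)$, namely $S_C=\mathtt{assert}\ X;\ \mathtt{havoc}\ \vec v;\ \mathtt{validate};\ \mathtt{assume}\ Y$. Let $X',Y'$ be expectations. (1) If $S'$ is a minimal error-witnessing slice of $S_C$ w.r.t. $(X',Y')$ which contains $\mathtt{assert}\ X$, then $X'(\sigma')\not\le X(\sigma')$ for some state $\sigma'$. (2) If $S'$ is a verification-witnessing slice of $S_C$ w.r.t. $(X',Y')$ with $\models\{X'\}S'\{Y'\}$ which does not contain $\mathtt{assume}\ Y$, then $X'\preceq Y'$.
   Context: Expectations are functions from program states to $[0,\infty]$, ordered pointwise by $\preceq$. HeyVL verification pre-expectations: $\mathrm{vp}[S_1;S_2](Z)=\mathrm{vp}[S_1](\mathrm{vp}[S_2](Z))$; $\mathrm{vp}[\mathtt{assert}\ X](Z)=\min(X,Z)$; $\mathrm{vp}[\mathtt{havoc}\ \vec v](Z)$ is the pointwise infimum of $Z$ over all values of $\vec v$; $\mathrm{vp}[\mathtt{validate}](Z)$ is $\infty$ where $Z=\infty$ and $0$ elsewhere; $\mathrm{vp}[\mathtt{assume}\ Y](Z)$ is $\infty$ where $Y\le Z$ and $Z$ elsewhere; $\mathrm{vp}[\mathtt{skip}](Z)=Z$. Subprograms of $S_C$ are obtained by removing (replacing by $\mathtt{skip}$) some of its four statements. Write $\sigma\models\{A\}S\{B\}$ iff $A(\sigma)\le\mathrm{vp}[S](B)(\sigma)$ and $\models\{A\}S\{B\}$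 iff this holds for all $\sigma$. A subprogram $P$ of $S$ is an error-witnessing slice w.r.t. $(A,B)$ if $\not\models\{A\}P\{B\}$ and every state $\sigma'$ with $\sigma'\not\models\{A\}P\{B\}$ satisfies $\sigma'\not\models\{A\}S\{B\}$; it is minimal if no proper subprogram of it is also such a slice. $P$ is a verification-witnessing slice w.r.t. $(A,B)$ if $\models\{A\}P\{B\}$ implies $\models\{A\}S\{B\}$. *)

From HB Require Import structures.
From mathcomp Require Import all_boot all_order all_algebra.
From mathcomp Require Import boolp classical_sets reals constructive_ereal ereal.
Set Implicit Arguments. Unset Strict Implicit. Unset Printing Implicit Defensive.
Import Order.TTheory GRing.Theory Num.Theory.
Local Open Scope classical_set_scope.
Local Open Scope ereal_scope.

Section HeyVL.
Variables (R : realType) (Var : eqType) (Val : Type).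

Definition state := Var -> Val.
(* expectations: functions from states to \bar R (meant nonnegative) *)
Definition expect := state -> \bar R.

Definition nonneg_exp (X : expect) : Prop := forall s, 0 <= X s.

Definition exp_le (X Y : expect) : Prop := forall s, X s <= Y s.

Inductive stmt :=
| SAssert of expect
| SHavoc of seq Var
| SValidate
| SAssume of expect
| SSkip.

Definition havoc_set (vs : seq Var) (s : state) : set state :=
  [set s' | forall x, x \notin vs -> s' x = s x].

Definition vp_stmt (c : stmt) (Z : expect) : expect :=
  match c with
  | SAssert X => fun s => Order.min (X s) (Z s)
  | SHavoc vs => fun s => ereal_inf (Z @` havoc_set vs s)
  | SValidate => fun s => if Z s == +oo then +oo else 0
  | SAssume Y => fun s => if Y s <= Z s then +oo else Z s
  | SSkip => Z
  end.

Definition vp (P : seq stmt) (Z : expect) : expect := foldr vp_stmt Z P.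

Definition holds_at (A : expect) (P : seq stmt) (B : expect) (s : state) : Prop :=
  A s <= vp P B s.

Definition valid (A : expect) (P : seq stmt) (B : expect) : Prop :=
  forall s, holds_at A P B s.

(* Subprograms of S_C: each of the four statements is kept (true) or
   replaced by skip (false). A mask is (assert, havoc, validate, assume). *)
Definition mask4 := (bool * bool * bool * bool)%type.

Definition keep (b : bool) (c : stmt) : stmt := if b then c else SSkip.

Definition SC_sub (m : mask4) (X : expect) (vs : seq Var) (Y : expect) : seq stmt :=
  let: (a, h, w, y) := m in
  [:: keep a (SAssert X); keep h (SHavoc vs); keep w SValidate; keep y (SAssume Y)].

Definition full_mask : mask4 := (true, true, true, true).

Definition SC (X : expect) (vs : seq Var) (Y : expect) : seq stmt :=
  SC_sub full_mask X vs Y.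

Definition mask_le (m' m : mask4) : bool :=
  let: (a', h', w', y') := m' in
  let: (a, h, w, y) := m in
  [&& a' ==> a, h' ==> h, w' ==> w & y' ==> y].

Definition error_witnessing (P S : seq stmt) (A B : expect) : Prop :=
  ~ valid A P B /\
  forall s', ~ holds_at A P B s' -> ~ holds_at A S B s'.

Definition minimal_error_witnessing (m : mask4) (X : expect) (vs : seq Var)
    (Y A B : expect) : Prop :=
  error_witnessing (SC_sub m X vs Y) (SC X vs Y) A B /\
  forall m', mask_le m' m -> m' != m ->
    ~ error_witnessing (SC_sub m' X vs Y) (SC X vs Y) A B.

Definition verification_witnessing (P S : seq stmt) (A B : expect) : Prop :=
  valid A P B -> valid A S B.

Definition contains_assert (m : mask4) : bool := m.1.1.1.
Definition contains_assume (m : mask4) : bool := m.2.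

End HeyVL.

(* Every statement of S_C other than [assume] can only lower its post-expectation:
   [assert] takes a minimum, [havoc] an infimum over a set containing the current
   state, and [validate] sends finite values to 0.  Hence a slice without
   [assume Y] that verifies {X'} _ {Y'} forces X' <= Y'.  Conversely, if X' <= X,
   then [assert X] never decides whether X' is below the pre-expectation, so
   dropping it yields a slice with exactly the same failing states, which
   contradicts minimality. *)
From HB Require Import structures.
From mathcomp Require Import all_boot all_order all_algebra.
From mathcomp Require Import boolp classical_sets reals constructive_ereal ereal.
Set Implicit Arguments.
Unset Strict Implicit.
Unset Printing Implicit Defensive.
Import Order.TTheory GRing.Theory Num.Theory.
Local Open Scope ereal_scope.

Section SpecificationSlices.
Variables (R : realType) (Var : eqType) (Val : Type).
Implicit Types (X Y Z A B : expect R Var Val) (P S : seq (stmt R Var Val)).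

Lemma vp_assert_le X Z : exp_le (vp_stmt (SAssert X) Z) Z.
Proof. by move=> s; rewrite /= ge_min lexx orbT. Qed.

Lemma vp_havoc_le vs Z : exp_le (vp_stmt (SHavoc R Val vs) Z) Z.
Proof. by move=> s; apply: ereal_inf_lbound; exists s. Qed.

Lemma vp_validate_le Z : nonneg_exp Z -> exp_le (vp_stmt (SValidate R Var Val) Z) Z.
Proof. by move=> Z_ge0 s /=; case: eqP => [->|_]. Qed.

Lemma vp_keep_le b c Z : exp_le (vp_stmt c Z) Z -> exp_le (vp_stmt (keep b c) Z) Z.
Proof. by case: b => [|_ s]. Qed.

Lemma vp_SC_sub_no_assume_le a h w X vs Y Z :
  nonneg_exp Z -> exp_le (vp (SC_sub (a, h, w, false) X vs Y) Z) Z.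
Proof.
move=> Z_ge0 s; rewrite /vp /=.
apply: le_trans (vp_keep_le a (vp_assert_le X _) s) _.
apply: le_trans (vp_keep_le h (vp_havoc_le vs _) s) _.
exact: (vp_keep_le w (vp_validate_le Z_ge0) s).
Qed.

Lemma valid_no_assume_le m X vs Y A B :
  nonneg_exp B -> valid A (SC_sub m X vs Y) B -> ~~ contains_assume m ->
  exp_le A B.
Proof.
case: m => [[[a h] w] []] // B_ge0 AB _.
by move=> s; apply: le_trans (AB s) (vp_SC_sub_no_assume_le _ _ _ _ _ _ B_ge0 s).
Qed.

Lemma holds_at_assert_skip A X P B s :
  A s <= X s -> holds_at A (SAssert X :: P) B s <-> holds_at A (SSkip R Var Val :: P) B s.
Proof. by move=> AX; rewrite /holds_at /= le_min AX. Qed.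

Lemma error_witnessing_eq P P' S A B :
  (forall s, holds_at A P B s <-> holds_at A P' B s) ->
  error_witnessing P S A B -> error_witnessing P' S A B.
Proof.
move=> PP' [P_invalid P_fail]; split.
- by move=> P'_valid; apply: P_invalid => s; apply/PP'.
- by move=> s /(iffRLn (PP' s)); exact: P_fail.
Qed.

Lemma minimal_error_witnessing_assert m X vs Y A B :
  minimal_error_witnessing m X vs Y A B -> contains_assert m -> ~ exp_le A X.
Proof.
case: m => [[[[] h] w] y] // [ew minimal] _ AX.
apply: (minimal (false, h, w, y)) => //=; first by rewrite !implybb.
apply: error_witnessing_eq ew => s.
exact: holds_at_assert_skip (AX s).
Qed.

End SpecificationSlices.

Theorem theorem5 (R : realType) (Var : eqType) (Val : Type)
  (vs : seq Var) (X Y X' Y' : expect R Var Val) :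
  nonneg_exp X -> nonneg_exp Y -> nonneg_exp X' -> nonneg_exp Y' ->
  (* (1) *)
  (forall m : mask4,
     minimal_error_witnessing m X vs Y X' Y' ->
     contains_assert m ->
     exists s', ~ (X' s' <= X s')) /\
  (* (2) *)
  (forall m : mask4,
     verification_witnessing (SC_sub m X vs Y) (SC X vs Y) X' Y' ->
     valid X' (SC_sub m X vs Y) Y' ->
     ~~ contains_assume m ->
     exp_le X' Y').
Proof.
move=> _ _ _ Y'_ge0; split.
- by move=> m ew assert_m; apply/existsNP; exact: minimal_error_witnessing_assert ew assert_m.
- by move=> m _; exact: valid_no_assume_le Y'_ge0.
Qed.
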